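(* Let $L$ be a semiprime right Leibniz algebra over a field $\mathbb{F}$. Let $\mathscr{D}=\{(\delta,I): I\in\mathscr{J}_e(L),\ \delta\in\mathrm{PDer}(I,L)\}$ with the equivalence relation $(\delta,I)\equiv(\mu,J)$ iff there exists $K\in\mathscr{J}_e(L)$ with $K\subseteq I\cap J$ and $\delta|_K=\mu|_K$; let $Q=Q(L)=\mathscr{D}/\equiv$ and denote by $\delta_I$ the class of $(\delta,I)$. Define $p\cdot\delta_I=(p\delta)_I$ where $(p\delta)(y)=\delta(py)$; $\delta_I+\mu_J=(\delta+\mu)_{I\cap J}$ where $(\delta+\mu)(x)=\delta(x)+\mu(x)$ for $x\in I\cap J$; and $[\delta_I,\mu_J]=[\delta,\mu]_{(I\cap J)^2}$ where $[\delta,\mu]:(I\cap J)^2\to L$, $x\mapsto \mu\delta(x)-\delta\mu(x)$. Then $Q$ with these operations is a Leibniz algebra containing $L$ as a subalgebra via the monomorphism $\varphi:L\to Q$, $x\mapsto (R_x)_L$, where $R_x(y)=[y,x]$.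
   Context: A right Leibniz algebra satisfies $[x,[y,z]]=[[x,y],z]-[[x,z],y]$. An ideal $I$ is a subspace with $[I,L]\subseteq I$, $[L,I]\subseteq I$; $I^2=[I,I]$ is the span of $[x,y]$, $x,y\in I$. $L$ is semiprime if $[I,I]\neq\{0\}$ for every nonzero ideal $I$. An ideal $I$ is essential if $I\cap J\neq\{0\}$ for every nonzero ideal $J$; $\mathscr{J}_e(L)$ is the set of essential ideals of $L$. For an ideal $I$, $\mathrm{PDer}(I,L)$ is the set of partial derivations, i.e. linear maps $\delta:I\to L$ with $\delta([x,y])=[\delta(x),y]+[x,\delta(y)]$ for all $x,y\in I$. *)

From mathcomp Require Import all_boot all_algebra.
Set Implicit Arguments. Unset Strict Implicit. Unset Printing Implicit Defensive.
Import GRing.Theory.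
Local Open Scope ring_scope.

Section LeibnizDefs.
Variables (F : fieldType) (L : lmodType F) (br : L -> L -> L).

Definition bilinear_bracket : Prop :=
  (forall (a : F) (x y z : L), br (a *: x + y) z = a *: br x z + br y z) /\
  (forall (a : F) (x y z : L), br z (a *: x + y) = a *: br z x + br z y).

Definition right_leibniz_identity : Prop :=
  forall x y z : L, br x (br y z) = br (br x y) z - br (br x z) y.

Definition right_leibniz_algebra : Prop :=
  bilinear_bracket /\ right_leibniz_identity.

Definition is_subspace (I : L -> Prop) : Prop :=
  I 0 /\ forall (a : F) (x y : L), I x -> I y -> I (a *: x + y).

Definition is_ideal (I : L -> Prop) : Prop :=
  [/\ is_subspace I,
      (forall x y, I x -> I (br x y)) &
      (forall x y, I y -> I (br x y))].

Definition nonzero_set (I : L -> Prop) : Prop := exists x, I x /\ x <> 0.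

Definition sq (I : L -> Prop) : L -> Prop := fun z =>
  exists (n : nat) (c : 'I_n -> F) (u v : 'I_n -> L),
    (forall i, I (u i) /\ I (v i)) /\ z = \sum_(i < n) c i *: br (u i) (v i).

Definition semiprime : Prop :=
  forall I, is_ideal I -> nonzero_set I -> nonzero_set (sq I).

Definition cap (I J : L -> Prop) : L -> Prop := fun x => I x /\ J x.

Definition essential (I : L -> Prop) : Prop :=
  is_ideal I /\
  forall J, is_ideal J -> nonzero_set J -> nonzero_set (cap I J).

(** partial derivation δ : I -> L, represented by a function L -> L whose
    values outside I are irrelevant *)
Definition is_pder (I : L -> Prop) (d : L -> L) : Prop :=
  (forall (a : F) x y, I x -> I y -> d (a *: x + y) = a *: d x + d y) /\
  (forall x y, I x -> I y -> d (br x y) = br (d x) y + br x (d y)).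

Definition pairT := ((L -> L) * (L -> Prop))%type.

Definition inD (p : pairT) : Prop := essential p.2 /\ is_pder p.2 p.1.

Definition Dequiv (p q : pairT) : Prop :=
  exists K, essential K /\ (forall x, K x -> p.2 x /\ q.2 x) /\
            (forall x, K x -> p.1 x = q.1 x).

Definition Dscale (a : F) (p : pairT) : pairT := (fun y => p.1 (a *: y), p.2).
Definition Dadd (p q : pairT) : pairT := (fun x => p.1 x + q.1 x, cap p.2 q.2).
Definition Dbr (p q : pairT) : pairT :=
  (fun x => q.1 (p.1 x) - p.1 (q.1 x), sq (cap p.2 q.2)).
Definition Dzero : pairT := (fun _ => 0, fun _ => True).

Definition Rmul (x : L) : L -> L := fun y => br y x.
Definition phi (x : L) : pairT := (Rmul x, fun _ => True).

End LeibnizDefs.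

(** A (right) Leibniz algebra presented as a quotient: carrier [P] on [T],
    equivalence [E], zero [z], operations [add], [scl], [brk]. *)
Section QuotientAlgebra.
Variables (F : fieldType) (T : Type) (P : T -> Prop) (E : T -> T -> Prop)
  (z : T) (add : T -> T -> T) (scl : F -> T -> T) (brk : T -> T -> T).

Definition equivalence_on : Prop :=
  [/\ (forall q, P q -> E q q),
      (forall q r, P q -> P r -> E q r -> E r q) &
      (forall q r s, P q -> P r -> P s -> E q r -> E r s -> E q s)].

Definition closed_ops : Prop :=
  [/\ P z,
      (forall q r, P q -> P r -> P (add q r)),
      (forall a q, P q -> P (scl a q)) &
      (forall q r, P q -> P r -> P (brk q r))].

Definition compatible_ops : Prop :=
  [/\ (forall q q' r r', P q -> P q' -> P r -> P r' ->
         E q q' -> E r r' -> E (add q r) (add q' r')),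
      (forall a q q', P q -> P q' -> E q q' -> E (scl a q) (scl a q')) &
      (forall q q' r r', P q -> P q' -> P r -> P r' ->
         E q q' -> E r r' -> E (brk q r) (brk q' r'))].

Definition vector_space_axioms : Prop :=
  [/\ (forall q r s, P q -> P r -> P s -> E (add q (add r s)) (add (add q r) s)),
      (forall q r, P q -> P r -> E (add q r) (add r q)),
      (forall q, P q -> E (add z q) q) &
      (forall q, P q -> exists r, P r /\ E (add q r) z)] /\
  [/\ (forall (a b : F) q, P q -> E (scl a (scl b q)) (scl (a * b) q)),
      (forall q, P q -> E (scl 1 q) q),
      (forall (a : F) q r, P q -> P r -> E (scl a (add q r)) (add (scl a q) (scl a r))) &
      (forall (a b : F) q, P q -> E (scl (a + b) q) (add (scl a q) (scl b q)))].

Definition bracket_axioms : Prop :=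
  [/\ (forall (a : F) q r s, P q -> P r -> P s ->
         E (brk (add (scl a q) r) s) (add (scl a (brk q s)) (brk r s))),
      (forall (a : F) q r s, P q -> P r -> P s ->
         E (brk s (add (scl a q) r)) (add (scl a (brk s q)) (brk s r))) &
      (forall q r s, P q -> P r -> P s ->
         E (brk q (brk r s))
           (add (brk (brk q r) s) (scl (-1) (brk (brk q s) r))))].

Definition quotient_right_leibniz_algebra : Prop :=
  [/\ equivalence_on, closed_ops, compatible_ops, vector_space_axioms
    & bracket_axioms].

Definition quotient_monomorphism (L : lmodType F) (br : L -> L -> L)
  (f : L -> T) : Prop :=
  [/\ (forall x, P (f x)),
      (forall (a : F) x y, E (f (a *: x + y)) (add (scl a (f x)) (f y))),
      (forall x y, E (f (br x y)) (brk (f x) (f y))) &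
      (forall x y, E (f x) (f y) -> x = y)].

End QuotientAlgebra.

From mathcomp Require Import all_boot all_algebra.
Set Implicit Arguments. Unset Strict Implicit. Unset Printing Implicit Defensive.
Import GRing.Theory.
Local Open Scope ring_scope.

(** Every identity between classes can be checked on a single essential ideal
    on which all the partial derivations involved are defined.  Essential ideals
    are closed under intersection and, since [L] is semiprime, under squaring;
    and a partial derivation defined on [I] maps [N^2] into [N] for every ideal
    [N] contained in [I].  Hence on [M^2], resp. [(M^2)^2], where [M] is the
    intersection of the domains, all the maps and their composites are defined
    and linear, and the axioms of [Q] become identities between commutators of
    linear maps.  Injectivity of [x |-> (R_x)_L]: if [[K, w] = 0] for an
    essential ideal [K], then [K] meets the right annihilator of [K], an ideal,
    in an ideal of zero square, so [w = 0]. *)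

Section LinearOn.
Variables (F : fieldType) (L : lmodType F).

Definition linear_on (P : L -> Prop) (d : L -> L) : Prop :=
  forall a x y, P x -> P y -> d (a *: x + y) = a *: d x + d y.

Lemma subspaceT : is_subspace (fun _ : L => True).
Proof. by []. Qed.

Variables (P : L -> Prop) (hP : is_subspace P).

Lemma subspaceD x y : P x -> P y -> P (x + y).
Proof. by move=> hx hy; rewrite -[x]scale1r; apply: hP.2. Qed.

Lemma subspaceZ a x : P x -> P (a *: x).
Proof. by move=> hx; rewrite -[_ *: _]addr0; apply: hP.2 => //; exact: hP.1. Qed.

Lemma subspaceN x : P x -> P (- x).
Proof. by move=> hx; rewrite -scaleN1r; apply: subspaceZ. Qed.

Lemma subspaceB x y : P x -> P y -> P (x - y).
Proof. by move=> hx hy; apply: subspaceD => //; apply: subspaceN. Qed.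

Lemma subspace_sum n (c : 'I_n -> F) (f : 'I_n -> L) :
  (forall i, P (f i)) -> P (\sum_(i < n) c i *: f i).
Proof.
move=> hf; apply: big_ind => [|x y|i _]; first exact: hP.1.
  exact: subspaceD.
exact/subspaceZ/hf.
Qed.

Variables (d : L -> L) (hd : linear_on P d).

Lemma linear_on0 : d 0 = 0.
Proof.
have := @hd 1 0 0 hP.1 hP.1; rewrite !scale1r !addr0 => /esym/eqP.
by rewrite -subr_eq0 addrK => /eqP.
Qed.

Lemma linear_onZ a x : P x -> d (a *: x) = a *: d x.
Proof. by move=> hx; have := @hd a x 0 hx hP.1; rewrite !addr0 linear_on0 addr0. Qed.

Lemma linear_onD x y : P x -> P y -> d (x + y) = d x + d y.
Proof. by move=> hx hy; have := @hd 1 x y hx hy; rewrite !scale1r. Qed.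

Lemma linear_onN x : P x -> d (- x) = - d x.
Proof. by move=> hx; rewrite -scaleN1r linear_onZ // scaleN1r. Qed.

Lemma linear_onB x y : P x -> P y -> d (x - y) = d x - d y.
Proof. by move=> hx hy; rewrite linear_onD ?linear_onN //; apply: subspaceN. Qed.

Lemma linear_on_sum n (c : 'I_n -> F) (f : 'I_n -> L) :
  (forall i, P (f i)) -> d (\sum_(i < n) c i *: f i) = \sum_(i < n) c i *: d (f i).
Proof.
move=> hf; have [] // : P (\sum_(i < n) c i *: f i) /\
                       d (\sum_(i < n) c i *: f i) = \sum_(i < n) c i *: d (f i).
apply: (big_ind2 (fun u v => P u /\ d u = v)) => [|u1 v1 u2 v2 [hu1 <-] [hu2 <-]|i _].
- by split; [exact: hP.1 | exact: linear_on0].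
- by split; [exact: subspaceD | rewrite linear_onD].
- by split; [exact/subspaceZ/hf | rewrite linear_onZ].
Qed.

End LinearOn.

Arguments subspaceT {F L}.

Lemma commutator_derivation_expand (V : zmodType) (a1 a2 a3 a4 b1 b4 : V) :
  a1 + a2 + (a3 + a4) - (b1 + a3 + (a2 + b4)) = a1 - b1 + (a4 - b4).
Proof.
rewrite [a3 + a4]addrC (addrACA a1) [a2 + b4]addrC (addrACA b1).
by rewrite [b1 + _ + _]addrC [a3 + a2]addrC addrKA opprD addrACA.
Qed.

(* With [A, B, C, D, E, G] the values of [νμδ, μνδ, δνμ, δμν, νδμ, μδν] at a
   point, this is [[δ,[μ,ν]] = [[δ,μ],ν] - [[δ,ν],μ]] for [[δ,μ] := μδ - δμ]. *)
Lemma commutator_leibniz_expand (V : zmodType) (A B C D E G : V) :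
  (A - B) - (C - D) = ((A - E) - (G - D)) + - ((B - G) - (E - C)).
Proof.
by rewrite !opprB [RHS]addrACA !subrKA addrACA [RHS]addrACA [- C - B]addrC.
Qed.

Section Leibniz.
Variables (F : fieldType) (L : lmodType F) (br : L -> L -> L).
Hypotheses (hb : bilinear_bracket br) (hl : right_leibniz_identity br).
Implicit Types (I J K M N : L -> Prop) (d m : L -> L).

Lemma linear_on_brl w : linear_on (fun _ => True) (br^~ w).
Proof. by move=> a x y _ _; rewrite hb.1. Qed.

Lemma linear_on_brr w : linear_on (fun _ => True) (br w).
Proof. by move=> a x y _ _; rewrite hb.2. Qed.

Lemma br0l y : br 0 y = 0. Proof. exact: (linear_on0 subspaceT (linear_on_brl y)). Qed.
Lemma br0r y : br y 0 = 0. Proof. exact: (linear_on0 subspaceT (linear_on_brr y)). Qed.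
Lemma brZl a x y : br (a *: x) y = a *: br x y.
Proof. exact: (linear_onZ subspaceT (linear_on_brl y) a I). Qed.
Lemma brZr a x y : br y (a *: x) = a *: br y x.
Proof. exact: (linear_onZ subspaceT (linear_on_brr y) a I). Qed.
Lemma brDl x z y : br (x + z) y = br x y + br z y.
Proof. exact: (linear_onD (linear_on_brl y) I I). Qed.
Lemma brDr x z y : br y (x + z) = br y x + br y z.
Proof. exact: (linear_onD (linear_on_brr y) I I). Qed.
Lemma brNl x y : br (- x) y = - br x y.
Proof. exact: (linear_onN subspaceT (linear_on_brl y) I). Qed.
Lemma brNr x y : br y (- x) = - br y x.
Proof. exact: (linear_onN subspaceT (linear_on_brr y) I). Qed.
Lemma brBl x z y : br (x - z) y = br x y - br z y.
Proof. exact: (linear_onB subspaceT (linear_on_brl y) I I). Qed.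
Lemma brBr x z y : br y (x - z) = br y x - br y z.
Proof. exact: (linear_onB subspaceT (linear_on_brr y) I I). Qed.

Lemma ideal_subspace I : is_ideal br I -> is_subspace I. Proof. by case. Qed.
Lemma essential_ideal I : essential br I -> is_ideal br I. Proof. by case. Qed.
Lemma essential_subspace I : essential br I -> is_subspace I.
Proof. by case=> /ideal_subspace. Qed.

Lemma sq_subspace N : is_subspace (sq br N).
Proof.
split.
  exists 0%N, (fun _ => 0), (fun _ => 0), (fun _ => 0).
  by split; [case | rewrite big_ord0].
move=> a x y [n1 [c1 [u1 [v1 [h1 ->]]]]] [n2 [c2 [u2 [v2 [h2 ->]]]]].
pose glue T (f1 : 'I_n1 -> T) (f2 : 'I_n2 -> T) (i : 'I_(n1 + n2)) :=
  match split i with inl j => f1 j | inr j => f2 j end.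
exists (n1 + n2)%N, (glue _ (fun j => a * c1 j) c2), (glue _ u1 u2), (glue _ v1 v2).
split; first by move=> i; rewrite /glue; case: (split i).
rewrite big_split_ord /glue scaler_sumr; congr (_ + _); apply: eq_bigr => i _.
  by rewrite (unsplitK (inl _)) scalerA.
by rewrite (unsplitK (inr _)).
Qed.

Lemma sq_br N u v : N u -> N v -> sq br N (br u v).
Proof.
by move=> hu hv; exists 1%N, (fun _ => 1), (fun _ => u), (fun _ => v); rewrite big_ord1 scale1r.
Qed.

Lemma sqS N M : (forall x, N x -> M x) -> forall x, sq br N x -> sq br M x.
Proof.
move=> sNM x [n [c [u [v [h ->]]]]]; exists n, c, u, v; split => // i.
by have [] := h i; split; apply: sNM.
Qed.

Lemma sq_sub N : is_ideal br N -> forall x, sq br N x -> N x.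
Proof.
move=> [hN lN _] x [n [c [u [v [h ->]]]]].
by apply: subspace_sum => // i; have [hu _] := h i; apply: lN.
Qed.

Lemma sq_ideal N : is_ideal br N -> is_ideal br (sq br N).
Proof.
move=> [_ lN rN]; have hS := sq_subspace N.
split => // [x y|x y] [n [c [u [v [h ->]]]]].
- rewrite (linear_on_sum subspaceT (linear_on_brl y)) //.
  apply: (subspace_sum hS) => i; have [hu hv] := h i.
  have -> : br (br (u i) (v i)) y = br (u i) (br (v i) y) + br (br (u i) y) (v i).
    by rewrite hl subrK.
  by apply: (subspaceD hS); apply: sq_br => //; apply: lN.
- rewrite (linear_on_sum subspaceT (linear_on_brr x)) //.
  apply: (subspace_sum hS) => i; have [hu hv] := h i.
  by rewrite hl; apply: (subspaceB hS); apply: sq_br => //; apply: rN.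
Qed.

Lemma cap_ideal I J : is_ideal br I -> is_ideal br J -> is_ideal br (cap I J).
Proof.
move=> [[I0 hI] lI rI] [[J0 hJ] lJ rJ]; split; first split.
- by split.
- by move=> a x y [? ?] [? ?]; split; [apply: hI | apply: hJ].
- by move=> x y [? ?]; split; [apply: lI | apply: lJ].
- by move=> x y [? ?]; split; [apply: rI | apply: rJ].
Qed.

Lemma essential_cap I J : essential br I -> essential br J -> essential br (cap I J).
Proof.
move=> [hI eI] [hJ eJ]; split; first exact: cap_ideal.
move=> K hK nK; have [x [[xI [xJ xK]] x0]] := eI _ (cap_ideal hJ hK) (eJ _ hK nK).
by exists x.
Qed.

Lemma essentialT : essential br (fun _ => True).
Proof. by split=> [|J _ [x [hx x0]]]; [|exists x]. Qed.

Lemma pder_sq I N d : is_subspace I -> is_pder br I d -> is_ideal br N ->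
  (forall x, N x -> I x) -> forall x, sq br N x -> N (d x).
Proof.
move=> hI [d_lin d_br] hN sNI x [n [c [u [v [h ->]]]]].
have [_ lN rN] := hN.
rewrite (linear_on_sum hI d_lin) => [|i]; last by have [hu _] := h i; apply/sNI/lN.
apply: (subspace_sum (ideal_subspace hN)) => i; have [hu hv] := h i.
rewrite d_br; try exact: sNI.
by apply: (subspaceD (ideal_subspace hN)); [apply: rN | apply: lN].
Qed.

Definition right_annihilator K : L -> Prop := fun w => forall z, K z -> br z w = 0.

Lemma right_annihilator_ideal K : is_ideal br K -> is_ideal br (right_annihilator K).
Proof.
move=> [_ lK _]; split; first split.
- by move=> z _; rewrite br0r.
- by move=> a x y hx hy z hz; rewrite hb.2 hx // hy // scaler0 addr0.
- by move=> x y hx z hz; rewrite hl (hx _ hz) br0l (hx _ (lK _ _ hz)) subrr.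
- by move=> x y hy z hz; rewrite hl (hy _ (lK _ _ hz)) (hy _ hz) br0l subrr.
Qed.

Lemma pder0 : is_pder br (fun _ => True) (fun _ => 0).
Proof. by split=> *; rewrite ?scaler0 ?addr0 ?br0l ?br0r ?addr0. Qed.

Lemma pderD I J d m : is_pder br I d -> is_pder br J m ->
  is_pder br (cap I J) (fun x => d x + m x).
Proof.
move=> [d_lin d_br] [m_lin m_br]; split=> [a x y|x y] [xI xJ] [yI yJ].
  by rewrite d_lin // m_lin // scalerDr addrACA.
by rewrite d_br // m_br // brDl brDr addrACA.
Qed.

Lemma pderZ I d a : is_subspace I -> is_pder br I d -> is_pder br I (fun y => d (a *: y)).
Proof.
move=> hI [d_lin d_br]; split=> [b x y|x y] xI yI.
  by rewrite scalerDr scalerA mulrC -scalerA d_lin //; apply: subspaceZ.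
rewrite -brZl d_br //; last exact: subspaceZ.
by rewrite [d (a *: y)](linear_onZ hI d_lin) // brZl brZr.
Qed.

Lemma pderN I d : is_pder br I d -> is_pder br I (fun y => - d y).
Proof.
move=> [d_lin d_br]; split=> [b x y|x y] xI yI.
  by rewrite d_lin // opprD scalerN.
by rewrite d_br // opprD brNl brNr.
Qed.

Lemma pder_commutator I J d m : is_ideal br I -> is_ideal br J ->
  is_pder br I d -> is_pder br J m ->
  is_pder br (sq br (cap I J)) (fun x => m (d x) - d (m x)).
Proof.
move=> hI hJ hd hm; have hIJ := cap_ideal hI hJ.
have inIJ x : sq br (cap I J) x -> [/\ cap I J x, cap I J (d x) & cap I J (m x)].
  move=> hx; split; first exact: sq_sub.
    by apply: pder_sq (ideal_subspace hI) hd hIJ _ _ hx => y [].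
  by apply: pder_sq (ideal_subspace hJ) hm hIJ _ _ hx => y [].
have [d_lin d_br] := hd; have [m_lin m_br] := hm.
split=> [a x y|x y] /inIJ[[xI xJ] [dxI dxJ] [mxI mxJ]] /inIJ[[yI yJ] [dyI dyJ] [myI myJ]].
  by rewrite d_lin // m_lin // m_lin // d_lin // scalerBr opprD addrACA.
have [_ lI rI] := hI; have [_ lJ rJ] := hJ.
rewrite d_br // m_br // (linear_onD m_lin) ?(linear_onD d_lin) ?m_br ?d_br //;
  try by [apply: rI | apply: lI | apply: rJ | apply: lJ].
by rewrite brBl brBr commutator_derivation_expand.
Qed.

Hypothesis hsp : semiprime br.

Lemma essential_sq N : essential br N -> essential br (sq br N).
Proof.
move=> [hN eN]; split=> [|J hJ nJ]; first exact: sq_ideal.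
have hNJ := cap_ideal hN hJ.
have [x [hx x0]] := hsp hNJ (eN _ hJ nJ).
exists x; split => //; split; first by apply: sqS hx => y [].
by have [] := sq_sub hNJ hx.
Qed.

Lemma essential_right_annihilator K w :
  essential br K -> right_annihilator K w -> w = 0.
Proof.
move=> [hK eK] Kw; have hA := right_annihilator_ideal hK.
have sq0 x : sq br (cap K (right_annihilator K)) x -> x = 0.
  move=> [n [c [u [v [h ->]]]]].
  by apply: big1 => i _; have [[uK _] [_ vA]] := h i; rewrite vA // scaler0.
case: (eqVneq w 0) => // w0.
have nKA : nonzero_set (cap K (right_annihilator K)).
  by apply: eK => //; exists w; split => //; exact/eqP.
have [x [hx nx]] := hsp (cap_ideal hK hA) nKA.
by exfalso; apply/nx/sq0.
Qed.

Lemma Dequiv_sq M p q : essential br M ->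
  (forall x, sq br M x -> p.2 x /\ q.2 x) ->
  (forall x, sq br M x -> p.1 x = q.1 x) -> Dequiv br p q.
Proof. by move=> eM hdom heq; exists (sq br M); split; [exact: essential_sq|]. Qed.

Lemma Dequiv_equivalence : equivalence_on (inD br) (Dequiv br).
Proof.
split.
- by move=> [d I] [eI _]; exists I.
- move=> p q _ _ [K [eK [sK pq]]]; exists K; split => //; split => x xK.
    by have [] := sK x xK.
  by rewrite pq.
- move=> p q r _ _ _ [K1 [e1 [s1 pq]]] [K2 [e2 [s2 qr]]].
  exists (cap K1 K2); split; first exact: essential_cap.
  split => x [x1 x2]; first by have [] := s1 x x1; have [] := s2 x x2.
  by rewrite pq // qr.
Qed.

Lemma D_closed_ops :
  closed_ops (inD br) (Dzero L) (@Dadd F L) (@Dscale F L) (@Dbr F L br).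
Proof.
split.
- by split; [exact: essentialT | exact: pder0].
- by move=> [d I] [m J] [eI pI] [eJ pJ]; split; [exact: essential_cap | exact: pderD].
- by move=> a [d I] [eI pI]; split=> //; exact: pderZ (essential_subspace eI) pI.
- move=> [d I] [m J] [eI pI] [eJ pJ]; split; first exact/essential_sq/essential_cap.
  exact: pder_commutator (essential_ideal eI) (essential_ideal eJ) pI pJ.
Qed.

Lemma D_compatible_ops :
  compatible_ops (inD br) (Dequiv br) (@Dadd F L) (@Dscale F L) (@Dbr F L br).
Proof.
split.
- move=> [d I] [d' I'] [m J] [m' J'] _ _ _ _ [K1 [e1 [s1 dd']]] [K2 [e2 [s2 mm']]].
  simpl in *; exists (cap K1 K2); split; first exact: essential_cap.
  split => x [x1 x2] /=; first by have [? ?] := s1 x x1; have [? ?] := s2 x x2.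
  by rewrite dd' // mm'.
- move=> a [d I] [d' I'] _ _ [K [eK [sK dd']]].
  simpl in *; exists K; split => //.
  by split => //= x xK; apply/dd'/(subspaceZ (essential_subspace eK)).
- move=> [d I] [d' I'] [m J] [m' J'] [eI pI] _ [eJ pJ] _
    [K1 [e1 [s1 dd']]] [K2 [e2 [s2 mm']]].
  simpl in *; have eK := essential_cap e1 e2; have hK := essential_ideal eK.
  apply: (Dequiv_sq eK) => x hx /=.
    split; apply: sqS hx => y [y1 y2].
      by have [? _] := s1 y y1; have [? _] := s2 y y2.
    by have [_ ?] := s1 y y1; have [_ ?] := s2 y y2.
  have [x1 x2] := sq_sub hK hx.
  have [dx1 dx2] := pder_sq (essential_subspace eI) pI hK (fun y h => (s1 y h.1).1) hx.
  have [mx1 mx2] := pder_sq (essential_subspace eJ) pJ hK (fun y h => (s2 y h.2).1) hx.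
  by rewrite -(dd' x) // -(mm' x) // -(dd' (m x)) // -(mm' (d x)).
Qed.

Lemma D_vector_space_axioms :
  vector_space_axioms (inD br) (Dequiv br) (Dzero L) (@Dadd F L) (@Dscale F L).
Proof.
split; split.
- move=> [d I] [m J] [n K] [eI _] [eJ _] [eK _].
  exists (cap I (cap J K)); split; first by apply: essential_cap => //; apply: essential_cap.
  by split => x [xI [xJ xK]] /=; [do !split | rewrite addrA].
- move=> [d I] [m J] [eI _] [eJ _].
  exists (cap I J); split; first exact: essential_cap.
  by split => x [xI xJ] /=; [do !split | rewrite addrC].
- by move=> [d I] [eI _]; exists I; split => //; split => x xI /=; [do !split | rewrite add0r].
- move=> [d I] [eI pI]; exists (fun y => - d y, I); split; first by split; last exact: pderN.
  by exists I; split => //; split => x xI /=; [do !split | rewrite subrr].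
- by move=> a b [d I] [eI _]; exists I; split => //; split => x xI //=; rewrite scalerA mulrC.
- by move=> [d I] [eI _]; exists I; split => //; split => x xI //=; rewrite scale1r.
- move=> a [d I] [m J] [eI _] [eJ _]; exists (cap I J).
  by split; [exact: essential_cap | split].
- move=> a b [d I] [eI pI]; have /= [d_lin _] := pI.
  exists I; split => //; split => x xI /=; first by do !split.
  by rewrite scalerDl (linear_onD d_lin) //; apply: (subspaceZ (essential_subspace eI)).
Qed.

Lemma Dbr_linear a p q r : inD br p -> inD br q -> inD br r ->
  Dequiv br (Dbr br (Dadd (Dscale a p) q) r)
            (Dadd (Dscale a (Dbr br p r)) (Dbr br q r)) /\
  Dequiv br (Dbr br r (Dadd (Dscale a p) q))
            (Dadd (Dscale a (Dbr br r p)) (Dbr br r q)).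
Proof.
move: p q r => [d I] [m J] [n K] [eI pI] [eJ pJ] [eK pK]; simpl in *.
set M := cap (cap I J) K.
have eM : essential br M by apply: essential_cap => //; apply: essential_cap.
have hM := essential_ideal eM.
have n_lin x : sq br M x ->
    n (a *: x) = a *: n x /\ n (d (a *: x) + m x) = n (d (a *: x)) + n (m x).
  move=> hx; have [_ xK] := sq_sub hM hx.
  have [_ dK] := pder_sq (essential_subspace eI) pI hM (fun y h => h.1.1)
    (subspaceZ (sq_subspace M) a hx).
  have [_ mK] := pder_sq (essential_subspace eJ) pJ hM (fun y h => h.1.2) hx.
  have [n_lin _] := pK.
  by rewrite (linear_onZ (essential_subspace eK) n_lin) // (linear_onD n_lin).
split; apply: (Dequiv_sq eM) => x hx /=.
- by split; [|split]; apply: sqS hx => y [[? ?] ?]; do !split.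
- by have [-> ->] := n_lin x hx; rewrite opprD addrACA.
- by split; [|split]; apply: sqS hx => y [[? ?] ?]; do !split.
- by have [-> ->] := n_lin x hx; rewrite opprD addrACA.
Qed.

Lemma Dbr_leibniz p q r : inD br p -> inD br q -> inD br r ->
  Dequiv br (Dbr br p (Dbr br q r))
    (Dadd (Dbr br (Dbr br p q) r) (Dscale (-1) (Dbr br (Dbr br p r) q))).
Proof.
move: p q r => [d I] [m J] [n K] [eI pI] [eJ pJ] [eK pK]; simpl in *.
set M := cap (cap I J) K.
have eM : essential br M by apply: essential_cap => //; apply: essential_cap.
have hM := essential_ideal eM; have hS := essential_ideal (essential_sq eM).
have sSM := sq_sub hM.
have hI := essential_subspace eI; have hJ := essential_subspace eJ.
have hK := essential_subspace eK.
have sSI y (hy : sq br M y) : I y := (sSM y hy).1.1.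
have sSJ y (hy : sq br M y) : J y := (sSM y hy).1.2.
have sSK y (hy : sq br M y) : K y := (sSM y hy).2.
apply: (Dequiv_sq (essential_sq eM)) => x hx /=.
  split; [|split]; apply: sqS hx => y hy; split; try by [apply: sSI | apply: sSJ | apply: sSK];
    by apply: sqS hy => z [[? ?] ?]; split.
have dS := pder_sq hI pI hS sSI hx; have mS := pder_sq hJ pJ hS sSJ hx.
have nS := pder_sq hK pK hS sSK hx.
have [[dmI dmJ] dmK] := pder_sq hI pI hM (fun y h => h.1.1) mS.
have [[dnI dnJ] dnK] := pder_sq hI pI hM (fun y h => h.1.1) nS.
have [[mdI mdJ] mdK] := pder_sq hJ pJ hM (fun y h => h.1.2) dS.
have [[mnI mnJ] mnK] := pder_sq hJ pJ hM (fun y h => h.1.2) nS.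
have [[ndI ndJ] ndK] := pder_sq hK pK hM (fun y h => h.2) dS.
have [[nmI nmJ] nmK] := pder_sq hK pK hM (fun y h => h.2) mS.
have pdnm := pder_commutator (sq_ideal (cap_ideal (essential_ideal eI) (essential_ideal eK)))
  (essential_ideal eJ) (pder_commutator (essential_ideal eI) (essential_ideal eK) pI pK) pJ.
have x_dnm : sq br (cap (sq br (cap I K)) J) x.
  by apply: sqS hx => y hy; split; [apply: sqS hy => z [[? ?] ?]; split | exact: sSJ].
(* [Dscale (-1)] scales the argument, not the value. *)
rewrite (linear_onZ (sq_subspace _) pdnm.1) // scaleN1r.
rewrite (linear_onB hI pI.1) // (linear_onB hK pK.1) // (linear_onB hJ pJ.1) //.
exact: commutator_leibniz_expand.
Qed.

Lemma D_bracket_axioms :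
  bracket_axioms (inD br) (Dequiv br) (@Dadd F L) (@Dscale F L) (@Dbr F L br).
Proof.
split=> [a p q r hp hq hr|a p q r hp hq hr|]; last exact: Dbr_leibniz.
  exact: (Dbr_linear a hp hq hr).1.
exact: (Dbr_linear a hp hq hr).2.
Qed.

Lemma D_quotient_right_leibniz_algebra :
  quotient_right_leibniz_algebra (inD br) (Dequiv br) (Dzero L)
    (@Dadd F L) (@Dscale F L) (@Dbr F L br).
Proof.
split; [exact: Dequiv_equivalence | exact: D_closed_ops | exact: D_compatible_ops
       | exact: D_vector_space_axioms | exact: D_bracket_axioms].
Qed.

Lemma phi_monomorphism : quotient_monomorphism (inD br) (Dequiv br) (@Dadd F L)
  (@Dscale F L) (@Dbr F L br) br (phi br).
Proof.
split.
- move=> x; split; first exact: essentialT.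
  split=> [a y z _ _|y z _ _]; rewrite /= /Rmul; first by rewrite hb.1.
  by rewrite (hl y z x) addrC subrK.
- move=> a x y; exists (fun _ => True); split; first exact: essentialT.
  by split=> // z _ /=; rewrite /Rmul hb.2 brZl.
- move=> x y; apply: (Dequiv_sq essentialT) => z hz /=; last exact: hl.
  by split=> //; apply: sqS hz.
- move=> x y [K [eK [_ Kxy]]]; apply/eqP; rewrite -subr_eq0; apply/eqP.
  apply: (essential_right_annihilator eK) => z zK.
  by move: (Kxy z zK); rewrite brBr /= /Rmul => ->; rewrite subrr.
Qed.

End Leibniz.

Theorem theorem4p4 (F : fieldType) (L : lmodType F) (br : L -> L -> L)
  (hL : right_leibniz_algebra br) (hsp : semiprime br) :
  quotient_right_leibniz_algebra (inD br) (Dequiv br) (Dzero L)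
    (@Dadd F L) (@Dscale F L) (@Dbr F L br) /\
  quotient_monomorphism (inD br) (Dequiv br) (@Dadd F L) (@Dscale F L)
    (@Dbr F L br) br (phi br).
Proof.
have [hb hl] := hL.
by split; [exact: D_quotient_right_leibniz_algebra | exact: phi_monomorphism].
Qed.
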